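(* Let $n\ge1$, $\gamma=(\gamma_1,\dots,\gamma_n)$ with $\gamma_i>0$, let $k\in\{-1,-3,-5,\dots\}$, and let $f$ be B-polyharmonic of order $\frac{1-k}{2}$ and even with respect to each variable. Then one of the solutions of the Cauchy problem $$(B_k)_tu=(\Delta_\gamma)_xu,\ x\in\mathbb{R}^n_+,\ t>0,\qquad u(x,0;k)=f(x),\quad u_t(x,0;k)=0$$ is given by $u(x,t;-1)=f(x)$ for $k=-1$, and for $k=-3,-5,\dots$ by $$u(x,t;k)=f(x)+\sum_{h=1}^{-\frac{k+1}{2}}\frac{\Delta_\gamma^h f}{(k+1)(k+3)\cdots(k+2h-1)}\,\frac{t^{2h}}{2\cdot4\cdots 2h}.$$
   Context: $\mathbb{R}^n_+=\{x\in\mathbb{R}^n:x_i>0\ \forall i\}$. $(B_\nu)_t=\partial_t^2+\frac{\nu}{t}\partial_t$; $\Delta_\gamma=(\Delta_\gamma)_x=\sum_{i=1}^n\big(\partial_{x_i}^2+\frac{\gamma_i}{x_i}\partial_{x_i}\big)$. $C^m_{ev}$: functions on $\mathbb{R}^n_+$, $m$ times differentiable, with all derivatives continuous up to $x_i=0$, and $\frac{\partial^{2j+1}f}{\partial x_i^{2j+1}}=0$ at $x_i=0$ for all $i$ and integers $j\ge0$ with $2j+1\le m$. A function $f$ is B-polyharmonic of order $p$ if $f\in C^{2p}_{ev}$ and $\Delta_\gamma^p f=0$. *)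

From HB Require Import structures.
From mathcomp Require Import all_boot all_order all_algebra.
From mathcomp Require Import all_classical all_reals all_analysis.
Set Implicit Arguments. Unset Strict Implicit. Unset Printing Implicit Defensive.
Import Order.TTheory GRing.Theory Num.Theory.
Import numFieldNormedType.Exports.
Local Open Scope classical_set_scope.
Local Open Scope ring_scope.

Section Bops.
Variables (R : realType) (n : nat).

Definition Rnp : set 'rV[R]_n := [set x | forall i, 0 < x ord0 i].
Definition Rnp_cl : set 'rV[R]_n := [set x | forall i, 0 <= x ord0 i].

Definition ei (i : 'I_n) : 'rV[R]_n := delta_mx 0 i.

Definition refl (i : 'I_n) (x : 'rV[R]_n) : 'rV[R]_n :=
  \row_j (if j == i then - x ord0 j else x ord0 j).

Definition dpart (i : 'I_n) (f : 'rV[R]_n -> R) : 'rV[R]_n -> R :=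
  fun x => 'D_(ei i) f x.

Definition dparts (s : seq 'I_n) (f : 'rV[R]_n -> R) : 'rV[R]_n -> R :=
  foldr dpart f s.

Definition Delta_gamma (gamma : 'rV[R]_n) (f : 'rV[R]_n -> R) : 'rV[R]_n -> R :=
  fun x => \sum_(i < n) (dpart i (dpart i f) x
                          + gamma ord0 i / x ord0 i * dpart i f x).

Definition Delta_gamma_pow (gamma : 'rV[R]_n) (p : nat) (f : 'rV[R]_n -> R) :=
  iter p (Delta_gamma gamma) f.

(* C^m_ev : m times differentiable on R^n_+, all derivatives of order <= m
   continuous up to the boundary, odd pure derivatives in x_i vanish at x_i = 0 *)
Definition Cev (m : nat) (f : 'rV[R]_n -> R) : Prop :=
  [/\ (forall s : seq 'I_n, (size s < m)%N ->
         forall x, Rnp x -> differentiable (dparts s f) x),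
      (forall s : seq 'I_n, (size s <= m)%N ->
         exists G : 'rV[R]_n -> R,
           {within Rnp_cl, continuous G} /\
           (forall x, Rnp x -> G x = dparts s f x)) &
      (forall (i : 'I_n) (j : nat), (j.*2.+1 <= m)%N ->
         forall y, Rnp_cl y -> y ord0 i = 0 ->
           dparts (nseq j.*2.+1 i) f @ within Rnp (nbhs y) --> (0 : R))].

Definition Bpolyharmonic (gamma : 'rV[R]_n) (p : nat) (f : 'rV[R]_n -> R) : Prop :=
  Cev p.*2 f /\ (forall x, Rnp x -> Delta_gamma_pow gamma p f x = 0).

End Bops.

From mathcomp Require Import all_boot all_order all_algebra.
From mathcomp Require Import all_classical all_reals all_analysis.
From mathcomp Require Import lra ring.
Set Implicit Arguments. Unset Strict Implicit. Unset Printing Implicit Defensive.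
Import Order.TTheory GRing.Theory Num.Theory.
Import numFieldNormedType.Exports.
Local Open Scope classical_set_scope.
Local Open Scope ring_scope.

(* For fixed x, the candidate u(x, .) is the even polynomial
   sum_(h <= m) c_h(x) t^(2h) with c_h = Delta_gamma^h f / d_h, where
   d_(h+1) = d_h (k + 2h + 1) (2h + 2).  Since
   B_k t^(2h+2) = (k + 2h + 1) (2h + 2) t^(2h), the Bessel operator shifts the
   coefficients down: B_k u = sum_(h < m) Delta_gamma^(h+1) f t^(2h) / d_h.
   Applying Delta_gamma to the coefficients gives the same sum plus the term
   Delta_gamma^(m+1) f t^(2m) / d_m, which vanishes because f is B-polyharmonic
   of order m + 1.  The d_h are nonzero because k = -(2m+1) is none of
   -1, -3, ..., -(2m-1), and the initial conditions hold because u is even in t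
   with constant term f. *)

Section PartialDerivatives.
Variables (R : realType) (n : nat).
Local Notation V := 'rV[R]_n.

Lemma differentiable_near0 (g : V -> R) x :
  (\forall y \near x, g y = 0) -> differentiable g x.
Proof.
move=> g0; have gx0 : g x = 0 := nbhs_singleton g0.
apply/diff_locallyP.
have g_lin : g \o shift x = cst (g x) + \0 +o_ 0 id.
  apply/eqaddoP => e e_gt0.
  have : \forall h \near (0 : V), g (h + x) = 0.
    by rewrite (near_shift x) /=; apply: filterS g0 => z gz0 /=; rewrite sub0r addrNK.
  apply: filterS => h /= gh0; rewrite !fctE /= gh0 gx0 !addr0 subrr normr0.
  by rewrite mulr_ge0 // ltW.
rewrite (diff_unique (df := (\0 : {linear V -> R})) _ g_lin) //.
  by split => //; apply: cst_continuous.
exact: cst_continuous.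
Unshelve. all: by end_near. Qed.

Lemma differentiable_near_eq (g h : V -> R) x :
  differentiable g x -> (\forall y \near x, g y = h y) -> differentiable h x.
Proof.
move=> dg gh; have -> : h = g + (h - g) by apply/funext => y /=; rewrite addrC subrK.
apply: differentiableD => //; apply: differentiable_near0.
by apply: filterS gh => y ghy; rewrite !fctE ghy subrr.
Qed.

Lemma dpartD (g h : V -> R) i x : differentiable g x -> differentiable h x ->
  dpart i (fun y => g y + h y) x = dpart i g x + dpart i h x.
Proof.
by move=> dg dh; rewrite /dpart (deriveD (diff_derivable dg) (diff_derivable dh)).
Qed.

Lemma dpartM (g h : V -> R) i x : differentiable g x -> differentiable h x ->
  dpart i (fun y => g y * h y) x = g x * dpart i h x + h x * dpart i g x.
Proof.
by move=> dg dh; rewrite /dpart (deriveM (diff_derivable dg) (diff_derivable dh)).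
Qed.

Lemma dpartMr (g : V -> R) a i x : differentiable g x ->
  dpart i (fun y => g y * a) x = dpart i g x * a.
Proof. by move=> dg; rewrite /dpart (deriveMr _ (diff_derivable dg)) mulrC. Qed.

Lemma dpart_cst (a : R) i x : dpart i (fun _ : V => a) x = 0.
Proof. exact: derive_cst. Qed.

Lemma dpart_coord i j x : dpart i (fun y : V => y ord0 j) x = ei R i ord0 j.
Proof.
have := @derive_mx R V 1 n id x (ei R i) (@derivable_id _ V x (ei R i)).
by rewrite derive_id => /(congr1 (fun M : V => M ord0 j)); rewrite !mxE.
Qed.

Variable D : set V.
Hypothesis openD : open D.

Fixpoint diffn (r : nat) (g : V -> R) : Prop :=
  if r is r'.+1 then
    (forall x, D x -> differentiable g x) /\ forall i, diffn r' (dpart i g)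
  else True.

Lemma near_open x : D x -> \forall y \near x, D y.
Proof. by move=> Dx; apply: open_nbhs_nbhs. Qed.

Lemma dpart_eq_on (g h : V -> R) i x : D x -> (forall y, D y -> g y = h y) ->
  dpart i g x = dpart i h x.
Proof.
move=> Dx gh; rewrite /dpart; apply: near_eq_derive.
by near=> y; apply: gh; near: y; apply: near_open.
Unshelve. all: by end_near.
Qed.

Lemma diffn_eq_on r (g h : V -> R) : (forall y, D y -> g y = h y) ->
  diffn r g -> diffn r h.
Proof.
elim: r g h => // r IH g h gh [dg dpg]; split=> [x Dx|i].
  apply: differentiable_near_eq (dg x Dx) _.
  by near=> y; apply: gh; near: y; apply: near_open.
by apply: IH (dpg i) => y Dy; apply: dpart_eq_on.
Unshelve. all: by end_near. Qed.

Lemma diffnW r (g : V -> R) : diffn r.+1 g -> diffn r g.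
Proof. by elim: r g => // r IH g [dg dpg]; split=> // i; apply: IH. Qed.

Lemma diffn_le r r' (g : V -> R) : (r <= r')%N -> diffn r' g -> diffn r g.
Proof.
move=> /subnK <-; elim: (r' - r)%N => // d IH dg.
by apply/IH/diffnW; rewrite -addSn.
Qed.

Lemma diffn_cst r (a : R) : diffn r (fun _ => a).
Proof.
elim: r a => // r IH a; split=> [x _|i]; first exact: differentiable_cst.
by apply: diffn_eq_on (IH 0) => y _; rewrite dpart_cst.
Qed.

Lemma diffnD r (g h : V -> R) : diffn r g -> diffn r h -> diffn r (fun y => g y + h y).
Proof.
elim: r g h => // r IH g h [dg dpg] [dh dph]; split=> [x Dx|i].
  exact: differentiableD (dg x Dx) (dh x Dx).
apply: diffn_eq_on (IH _ _ (dpg i) (dph i)) => y Dy.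
by rewrite dpartD; [| apply: dg | apply: dh].
Qed.

Lemma diffnM r (g h : V -> R) : diffn r g -> diffn r h -> diffn r (fun y => g y * h y).
Proof.
elim: r g h => // r IH g h [dg dpg] [dh dph]; split=> [x Dx|i].
  exact: differentiableM (dg x Dx) (dh x Dx).
have := diffnD (IH _ _ (diffnW (conj dg dpg)) (dph i))
               (IH _ _ (diffnW (conj dh dph)) (dpg i)).
apply: diffn_eq_on => y Dy.
by rewrite dpartM; [| apply: dg | apply: dh].
Qed.

Lemma diffn_coord r j : diffn r (fun y : V => y ord0 j).
Proof.
case: r => // r; split=> [x _|i]; first exact: differentiable_coord.
by apply: diffn_eq_on (diffn_cst r (ei R i ord0 j)) => y _; rewrite dpart_coord.
Qed.

Lemma diffnV (g : V -> R) : (forall r, diffn r g) -> (forall y, D y -> g y != 0) ->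
  forall r, diffn r (fun y => (g y)^-1).
Proof.
move=> dg g0; have [dg1 _] := dg 1%N; elim=> // r IH; split=> [x Dx|i].
  exact: differentiableV (dg1 x Dx) (g0 x Dx).
have := diffnM (diffn_cst r (-1)) (diffnM IH (diffnM IH ((dg r.+1).2 i))).
apply: diffn_eq_on => y Dy.
rewrite /dpart deriveV ?g0 //; last exact/diff_derivable/dg1.
by rewrite -exprVn expr2 mulN1r mulrA -mulNr.
Qed.

Lemma diffn_sum r (I : Type) (s : seq I) (P : pred I) (F : I -> V -> R) :
  (forall i, diffn r (F i)) -> diffn r (fun y => \sum_(i <- s | P i) F i y).
Proof.
move=> dF; elim: s => [|a s IH].
  by apply: diffn_eq_on (diffn_cst r 0) => y _; rewrite big_nil.
under [fun y => _]funext do rewrite big_cons.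
by case: (P a) => //; apply: diffnD.
Qed.

Variable gamma : 'rV[R]_n.

Lemma diffn_Delta_gamma r g : (forall y i, D y -> y ord0 i != 0) ->
  diffn r.+2 g -> diffn r (Delta_gamma gamma g).
Proof.
move=> D_neq0 dg; apply: diffn_sum => i.
apply: diffnD; first exact: (dg.2 i).2 i.
apply: diffnM (diffnW (dg.2 i)); apply: diffnM; first exact: diffn_cst.
exact: (diffnV (fun r => diffn_coord r i) (fun y Dy => D_neq0 y i Dy) r).
Qed.

Lemma diffn_Delta_gamma_pow h r g : (forall y i, D y -> y ord0 i != 0) ->
  diffn (r + h.*2) g -> diffn r (Delta_gamma_pow gamma h g).
Proof.
move=> D_neq0; elim: h r => [|h IH] r; first by rewrite addn0.
by rewrite doubleS !addnS -!addSn => /IH; apply: diffn_Delta_gamma.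
Qed.

Lemma Delta_gamma_cst a x : Delta_gamma gamma (fun _ : V => a) x = 0.
Proof.
rewrite /Delta_gamma big1 // => i _.
have -> : dpart i (fun _ : V => a) = fun _ => 0 by apply/funext => y; apply: dpart_cst.
by rewrite !dpart_cst mulr0 addr0.
Qed.

Lemma Delta_gammaD g h x : D x -> diffn 2 g -> diffn 2 h ->
  Delta_gamma gamma (fun y => g y + h y) x = Delta_gamma gamma g x + Delta_gamma gamma h x.
Proof.
move=> Dx [dg dpg] [dh dph]; rewrite /Delta_gamma -big_split; apply: eq_bigr => i _ /=.
have dD y : D y -> dpart i (fun z => g z + h z) y = dpart i g y + dpart i h y.
  by move=> Dy; apply: dpartD; [apply: dg | apply: dh].
rewrite (dpart_eq_on _ Dx dD) dD // dpartD; [|exact: (dpg i).1|exact: (dph i).1].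
by rewrite mulrDr addrACA.
Qed.

Lemma Delta_gammaMr g a x : D x -> diffn 2 g ->
  Delta_gamma gamma (fun y => g y * a) x = Delta_gamma gamma g x * a.
Proof.
move=> Dx [dg dpg]; rewrite /Delta_gamma mulr_suml; apply: eq_bigr => i _ /=.
have dMr y : D y -> dpart i (fun z => g z * a) y = dpart i g y * a.
  by move=> Dy; apply/dpartMr/dg.
rewrite (dpart_eq_on _ Dx dMr) dMr // dpartMr; last exact: (dpg i).1.
by rewrite mulrDl mulrA.
Qed.

Lemma Delta_gamma_lincomb (I : Type) (s : seq I) (F : I -> V -> R) (a : I -> R) x :
  D x -> (forall j, diffn 2 (F j)) ->
  Delta_gamma gamma (fun y => \sum_(j <- s) F j y * a j) x
    = \sum_(j <- s) Delta_gamma gamma (F j) x * a j.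
Proof.
move=> Dx dF; elim: s => [|b s IH].
  by under [fun y => _]funext do rewrite big_nil; rewrite big_nil Delta_gamma_cst.
under [fun y => _]funext do rewrite big_cons.
rewrite Delta_gammaD ?Delta_gammaMr ?big_cons ?IH //.
- by apply: diffnM => //; apply: diffn_cst.
- by apply: diffn_sum => j; apply: diffnM => //; apply: diffn_cst.
Qed.

End PartialDerivatives.

Section EvenPolynomials.
Variable R : realFieldType.

Definition bessel_denom (k : R) (h : nat) : R :=
  \prod_(1 <= l < h.+1) ((k + (l.*2)%:R - 1) * (l.*2)%:R).

Lemma bessel_denom0 k : bessel_denom k 0 = 1.
Proof. by rewrite /bessel_denom big_geq. Qed.

Lemma bessel_denomS k h :
  bessel_denom k h.+1 = bessel_denom k h * ((k + (h.*2.+1)%:R) * (h.*2.+2)%:R).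
Proof. by rewrite /bessel_denom big_nat_recr //= doubleS -natr1 addrA addrK. Qed.

Lemma bessel_denom_neq0_le k h h' :
  (h <= h')%N -> bessel_denom k h' != 0 -> bessel_denom k h != 0.
Proof.
move=> /subnK <-; elim: (h' - h)%N => // d IH.
by rewrite addSn bessel_denomS mulf_eq0 negb_or => /andP[/IH].
Qed.

Lemma bessel_denom_odd_neq0 m : bessel_denom (- (m.*2.+1)%:R) m != 0.
Proof.
rewrite prodf_seq_neq0; apply/allP => l; rewrite mem_index_iota => /andP[l_gt0 l_le_m].
have l2_le : (l.*2)%:R <= (m.*2)%:R :> R by rewrite ler_nat leq_double.
have l2_gt0 : 0 < (l.*2)%:R :> R by rewrite ltr0n double_gt0.
apply: mulf_neq0; last exact: lt0r_neq0.
by apply: ltr0_neq0; rewrite -natr1; lra.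
Qed.

Definition bessel_op (k t : R) (p : {poly R}) : R :=
  p^`()^`().[t] + k / t * p^`().[t].

Lemma bessel_opXn (k t : R) h : t != 0 ->
  bessel_op k t 'X^(h.*2.+2) = (k + (h.*2.+1)%:R) * (h.*2.+2)%:R * t ^+ h.*2.
Proof.
move=> t_neq0; rewrite /bessel_op derivXn derivMn derivXn /= !hornerMn !hornerXn exprS.
by rewrite !mulr_natr; field.
Qed.

Lemma bessel_op_even_poly (c : nat -> R) N (k t : R) : t != 0 ->
  bessel_op k t (\sum_(h < N.+1) c h *: 'X^(h.*2))
    = \sum_(h < N) c h.+1 * ((k + (h.*2.+1)%:R) * (h.*2.+2)%:R * t ^+ h.*2).
Proof.
move=> t_neq0; rewrite /bessel_op !raddf_sum !horner_sum mulr_sumr -big_split.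
rewrite big_ord_recl /= expr0 alg_polyC derivC deriv0 horner0 mulr0 !add0r.
apply: eq_bigr => h _; rewrite !derivZ !hornerZ mulrCA -mulrDr.
by rewrite /bump /= add1n doubleS -bessel_opXn.
Qed.

Lemma even_poly_at0 (c : nat -> R) N : (\sum_(h < N.+1) c h *: 'X^(h.*2)).[0] = c 0.
Proof.
rewrite horner_sum big_ord_recl big1 => [|h _]; rewrite hornerZ hornerXn.
  by rewrite expr0 mulr1 addr0.
by rewrite doubleS expr0n mulr0.
Qed.

Lemma even_poly_deriv_at0 (c : nat -> R) N : (\sum_(h < N) c h *: 'X^(h.*2))^`().[0] = 0.
Proof.
rewrite raddf_sum horner_sum big1 // => -[[|h] _] _ /=.
  by rewrite derivZ derivXn hornerZ hornerMn mulr0n mulr0.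
by rewrite derivZ derivXn hornerZ hornerMn hornerXn doubleS /= expr0n mul0rn mulr0.
Qed.

End EvenPolynomials.

Lemma open_Rnp {R : realType} {n : nat} : open (@Rnp R n).
Proof.
rewrite openE => x Px.
apply: (@filter_forall 'rV[R]_n 'I_n (fun i y => 0 < y ord0 i) (nbhs x) _) => i.
apply: (cvgr_gt (f := fun y : 'rV[R]_n => y ord0 i) (x ord0 i)) => //.
exact: coord_continuous.
Qed.

Lemma Rnp_coord_neq0 {R : realType} {n : nat} (y : 'rV[R]_n) i : Rnp y -> y ord0 i != 0.
Proof. by move=> Py; rewrite gt_eqF // Py. Qed.

Lemma Cev_diffn (R : realType) (n : nat) r (g : 'rV[R]_n -> R) :
  Cev r g -> diffn (@Rnp R n) r g.
Proof.
case=> dg _ _; elim: r g dg => // r IH g dg; split=> [x Px|i]; first exact: (dg [::]).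
apply: IH => s s_lt x Px.
by have := dg (rcons s i); rewrite size_rcons ltnS -cats1 /dparts foldr_cat; apply.
Qed.

Section BesselSeries.
Variables (R : realType) (n : nat) (gamma : 'rV[R]_n) (m : nat) (f : 'rV[R]_n -> R) (k : R).
Local Notation V := 'rV[R]_n.

Definition bessel_coef (x : V) (h : nat) : R :=
  Delta_gamma_pow gamma h f x / bessel_denom k h.

Definition bessel_series (x : V) : {poly R} :=
  \sum_(h < m.+1) bessel_coef x h *: 'X^(h.*2).

Lemma horner_bessel_series x t : (bessel_series x).[t] =
  \sum_(h < m.+1) Delta_gamma_pow gamma h f x * (t ^+ h.*2 / bessel_denom k h).
Proof.
by rewrite horner_sum; apply: eq_bigr => h _; rewrite hornerZ hornerXn mulrAC -mulrA.
Qed.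

Lemma bessel_series_at0 x : (bessel_series x).[0] = f x.
Proof. by rewrite even_poly_at0 /bessel_coef bessel_denom0 divr1. Qed.

Lemma bessel_series_deriv_at0 x : (bessel_series x)^`().[0] = 0.
Proof. exact: even_poly_deriv_at0. Qed.

Lemma horner_bessel_seriesE x t : (bessel_series x).[t] =
  f x + \sum_(1 <= h < m.+1) Delta_gamma_pow gamma h f x
          / (\prod_(1 <= l < h.+1) (k + (l.*2)%:R - 1))
          * (t ^+ h.*2 / (\prod_(1 <= l < h.+1) (l.*2)%:R)).
Proof.
rewrite horner_bessel_series big_ord_recl bessel_denom0 divr1 mulr1 big_add1 big_mkord /=.
congr (_ + _); apply: eq_bigr => h _.
by rewrite /bump /= add1n /bessel_denom big_split invfM /=; ring.
Qed.

Hypothesis f_diffn : diffn (@Rnp R n) (m.+1).*2 f.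
Hypothesis f_polyharmonic : forall x, Rnp x -> Delta_gamma_pow gamma m.+1 f x = 0.
Hypothesis k_admissible : bessel_denom k m != 0.

Lemma diffn_Delta_gamma_pow_f h : (h <= m)%N -> diffn (@Rnp R n) 2 (Delta_gamma_pow gamma h f).
Proof.
move=> h_le_m; apply: (diffn_Delta_gamma_pow open_Rnp gamma Rnp_coord_neq0).
by apply: diffn_le f_diffn; rewrite add2n -doubleS leq_double ltnS.
Qed.

Lemma diffn_bessel_series t : diffn (@Rnp R n) 2 (fun y => (bessel_series y).[t]).
Proof.
under [fun y => _]funext do rewrite horner_bessel_series.
apply: (diffn_sum open_Rnp) => h; apply: (diffnM open_Rnp).
  by apply: diffn_Delta_gamma_pow_f; rewrite -ltnS.
exact: (diffn_cst open_Rnp).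
Qed.

Lemma Delta_gamma_bessel_series x t : Rnp x ->
  Delta_gamma gamma (fun y => (bessel_series y).[t]) x
    = \sum_(h < m) Delta_gamma_pow gamma h.+1 f x * (t ^+ h.*2 / bessel_denom k h).
Proof.
move=> Px; under [fun y => _]funext do rewrite horner_bessel_series.
rewrite (Delta_gamma_lincomb open_Rnp gamma) //; last first.
  by move=> h; apply: diffn_Delta_gamma_pow_f; rewrite -ltnS.
rewrite [LHS]big_ord_recr /=.
have -> : Delta_gamma gamma (fun y => Delta_gamma_pow gamma m f y) x = 0 := f_polyharmonic Px.
by rewrite mul0r addr0.
Qed.

Lemma bessel_op_bessel_series x t : t != 0 ->
  bessel_op k t (bessel_series x)
    = \sum_(h < m) Delta_gamma_pow gamma h.+1 f x * (t ^+ h.*2 / bessel_denom k h).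
Proof.
move=> t_neq0; rewrite bessel_op_even_poly //; apply: eq_bigr => h _.
have := bessel_denom_neq0_le (ltn_ord h) k_admissible.
rewrite bessel_denomS mulf_eq0 negb_or => /andP[_].
rewrite /bessel_coef bessel_denomS; move: (_ * _%:R) => c c_neq0.
by rewrite invfM -!mulrA mulKf // [_^-1 * _]mulrC.
Qed.

End BesselSeries.

Theorem theorem3p3 (R : realType) (n : nat) (gamma : 'rV[R]_n) (m : nat)
    (f : 'rV[R]_n -> R) :
  (0 < n)%N ->
  (forall i, 0 < gamma ord0 i) ->
  Bpolyharmonic gamma m.+1 f ->
  (forall i x, f (refl i x) = f x) ->
  let k : R := - (m.*2.+1)%:R in
  let u : 'rV[R]_n -> R -> R := fun x t =>
    f x + \sum_(1 <= h < m.+1)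
            Delta_gamma_pow gamma h f x
              / (\prod_(1 <= l < h.+1) (k + (l.*2)%:R - 1))
              * (t ^+ h.*2 / (\prod_(1 <= l < h.+1) (l.*2)%:R)) in
  (forall x t, Rnp x -> 0 < t ->
     [/\ derivable (u x) t 1,
         derivable (derive1 (u x)) t 1,
         differentiable (fun y => u y t) x,
         (forall i, differentiable (dpart i (fun y => u y t)) x) &
         derive1 (derive1 (u x)) t + k / t * derive1 (u x) t
           = Delta_gamma gamma (fun y => u y t) x]) /\
  (forall x, Rnp x ->
     [/\ u x 0 = f x, derivable (u x) 0 1 & derive1 (u x) 0 = 0]).
Proof.
move=> _ _ [/Cev_diffn f_diffn f_polyharmonic] _ k u.
have k_admissible : bessel_denom k m != 0 := bessel_denom_odd_neq0 R m.
have -> : u = fun x => horner (bessel_series gamma m f k x).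
  by apply/funext => x; apply/funext => t; rewrite /= horner_bessel_seriesE.
split=> [x t Px t_gt0 | x Px]; rewrite -!derivE; last first.
  by split; [exact: bessel_series_at0 | exact: derivable_horner |
             exact: bessel_series_deriv_at0].
have [u_diff u_diff2] := diffn_bessel_series gamma k f_diffn t.
split; [exact: derivable_horner | exact: derivable_horner | exact: u_diff |
        by move=> i; apply: (u_diff2 i).1 |].
have := bessel_op_bessel_series gamma f k_admissible x (lt0r_neq0 t_gt0).
rewrite /bessel_op => ->.
by rewrite (Delta_gamma_bessel_series k f_diffn f_polyharmonic t Px).
Qed.
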